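(* Let $f:(M,g_M)\to(N,g_N)$ be a smooth map between Riemannian manifolds. Then $f$ is a conformal Riemannian morphism if and only if there exist a smooth function $\wedge_f:M\to\mathbb{R}^{+}$ and, for each $x\in M$, a linear subspace $H_x\subset T_xM$ with $T_xM=H_x\oplus\ker(df_x)$, such that $P_{H_x}\circ P_{H_x}=\wedge_f(x)\,P_{H_x}$ for all $x\in M$.
   Context: A linear map $T:V\to W$ between real inner-product spaces is a geometric function if there exist a subspace $C\subset V$ with $V=\ker T\oplus C$ and $r>0$ with $\langle T u,T v\rangle=r\langle u,v\rangle$ for all $u,v\in C$ ($r$ is a conformality factor). A smooth $f:(M,g_M)\to(N,g_N)$ is a conformal Riemannian morphism if there is a smooth $\wedge_f:M\to\mathbb{R}^{+}$ such that each $df_x$ is a geometric function with conformality factor $\wedge_f(x)$. For a subspace $H_x\subset T_xM$ with $H_x\oplus\ker(df_x)=T_xM$, define the linear map $(df_{H_x})^{\diamond}:T_{f(x)}N\to T_xM$ by $(df_{H_x})^{\diamond}(X)=((df_x)|_{H_x})^{*}(X)$ if $X\in\mathrm{range}(df_x)$ and $(df_{H_x})^{\diamond}(X)=0$ if $X\in\mathrm{range}(df_x)^{\perp}$, where $((df_x)|_{H_x})^{*}$ is the adjoint of $(df_x)|_{H_x}:H_x\to\mathrm{range}(df_x)$ with respect to $g_M(x)$ and $g_N(f(x))$. Set $P_{H_x}=(df_{H_x})^{\diamond}\circ df_x:T_xM\to T_xM$. *)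

From HB Require Import structures.
From mathcomp Require Import all_boot all_order all_algebra.
From mathcomp Require Import boolp classical_sets reals.
Set Implicit Arguments. Unset Strict Implicit. Unset Printing Implicit Defensive.
Import Order.TTheory GRing.Theory Num.Theory.
Local Open Scope ring_scope.

Section Defs.
Variable R : realType.

(* Tangent vectors are row vectors; a linear map T : R^m -> R^n is v |-> v *m T. *)
Definition ip {k : nat} (g : 'M[R]_k) (u v : 'rV[R]_k) : R := (u *m g *m v^T) 0 0.

Definition is_inner_product {k : nat} (g : 'M[R]_k) : Prop :=
  g^T = g /\ forall v : 'rV[R]_k, v != 0 -> 0 < ip g v v.

(* V = A (+) B, subspaces represented by row spaces *)
Definition direct_complement {k : nat} (A B : 'M[R]_k) : Prop :=
  row_full (A + B)%MS /\ mxdirect (A + B)%MS.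

Definition geometric_function {m n : nat} (g : 'M[R]_m) (h : 'M[R]_n)
  (T : 'M[R]_(m, n)) (r : R) : Prop :=
  exists C : 'M[R]_m, direct_complement (kermx T) C /\ 0 < r /\
    forall u v : 'rV[R]_m, (u <= C)%MS -> (v <= C)%MS ->
      ip h (u *m T) (v *m T) = r * ip g u v.

(* Specification of (dT_H)^diamond : adjoint of T|_H : H -> range T on range T,
   zero on (range T)^perp *)
Definition diamond_spec {m n : nat} (g : 'M[R]_m) (h : 'M[R]_n)
  (T : 'M[R]_(m, n)) (H : 'M[R]_m) (D : 'M[R]_(n, m)) : Prop :=
  (forall X : 'rV[R]_n, (X <= T)%MS ->
      (X *m D <= H)%MS /\
      forall y : 'rV[R]_m, (y <= H)%MS -> ip g y (X *m D) = ip h (y *m T) X) /\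
  (forall X : 'rV[R]_n, (forall Y : 'rV[R]_n, (Y <= T)%MS -> ip h X Y = 0) ->
      X *m D = 0).

Definition diamond {m n : nat} (g : 'M[R]_m) (h : 'M[R]_n)
  (T : 'M[R]_(m, n)) (H : 'M[R]_m) : 'M[R]_(n, m) :=
  xget 0 [set D | diamond_spec g h T H D].

(* P_H = (dT_H)^diamond o T, as a matrix acting on row vectors *)
Definition P_H {m n : nat} (g : 'M[R]_m) (h : 'M[R]_n)
  (T : 'M[R]_(m, n)) (H : 'M[R]_m) : 'M[R]_m := T *m diamond g h T H.

(* conformal Riemannian morphism, with the manifold data abstracted:
   gM x = metric on T_xM, gN y = metric on T_yN, df x = differential at x,
   smooth = the smoothness predicate for functions M -> R *)
Definition conformal_riemannian_morphism {m n : nat} {M N : Type}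
  (smooth : (M -> R) -> Prop) (gM : M -> 'M[R]_m) (gN : N -> 'M[R]_n)
  (f : M -> N) (df : M -> 'M[R]_(m, n)) : Prop :=
  exists lam : M -> R, smooth lam /\ (forall x, 0 < lam x) /\
    forall x, geometric_function (gM x) (gN (f x)) (df x) (lam x).

End Defs.

From HB Require Import structures.
From mathcomp Require Import all_boot all_order all_algebra.
From mathcomp Require Import boolp classical_sets reals.
Import Order.TTheory GRing.Theory Num.Theory.
Local Open Scope ring_scope.

(* For v in H, the defining property of the adjoint gives
   <y, v P_H>_g = <y T, v T>_h for every y in H, and v P_H lies in H.
   Hence T is conformal with factor r on H exactly when P_H acts as r on H.
   If T is conformal on a complement C of ker T, take H := C: P_H maps into H
   and is r there, so P_H^2 = r P_H.  Conversely, if P_H^2 = r P_H, then for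
   z := v P_H - r v we get z P_H = 0, so |z T|_h^2 = <z, z P_H>_g = 0 and z
   lies in H and in ker T, whence z = 0. *)

Section InnerProduct.
Set Implicit Arguments.
Unset Strict Implicit.
Variable R : realType.

Lemma ipBr k (g : 'M[R]_k) y a b : ip g y (a - b) = ip g y a - ip g y b.
Proof. by rewrite /ip linearB mulmxBr !mxE. Qed.

Lemma ipZr k (g : 'M[R]_k) y c a : ip g y (c *: a) = c * ip g y a.
Proof. by rewrite /ip linearZ -scalemxAr !mxE. Qed.

Lemma ip0r k (g : 'M[R]_k) y : ip g y 0 = 0.
Proof. by rewrite /ip trmx0 mulmx0 mxE. Qed.

Lemma ip_self_eq0 k (g : 'M[R]_k) z :
  is_inner_product g -> ip g z z = 0 -> z = 0.
Proof.
move=> [_ g_pos] zz0; apply/eqP; apply/negPn/negP => /g_pos.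
by rewrite zz0 ltxx.
Qed.

Lemma gram_unitmx k p (g : 'M[R]_k) (B : 'M[R]_(p, k)) :
  is_inner_product g -> row_free B -> B *m g *m B^T \in unitmx.
Proof.
move=> g_ip B_free; rewrite unitmxE unitfE; apply/negP => /det0P [v v_neq0 vG].
suff /eqP : v *m B = 0 *m B by rewrite (inj_eq (row_free_inj B_free)) (negPf v_neq0).
rewrite mul0mx; apply: (ip_self_eq0 g_ip); rewrite /ip.
have -> : v *m B *m g *m (v *m B)^T = v *m (B *m g *m B^T) *m v^T.
  by rewrite trmx_mul !mulmxA.
by rewrite vG mul0mx mxE.
Qed.

Lemma direct_complement_sym k (A B : 'M[R]_k) :
  direct_complement A B -> direct_complement B A.
Proof.
move=> [AB_full AB_direct]; split; first by rewrite addsmxC.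
by apply/mxdirect_addsP; rewrite capmxC; apply/mxdirect_addsP.
Qed.

End InnerProduct.

Section Diamond.
Set Implicit Arguments.
Unset Strict Implicit.
Variables (R : realType) (m n : nat).
Variables (g : 'M[R]_m) (h : 'M[R]_n) (T : 'M[R]_(m, n)) (H : 'M[R]_m).
Hypotheses (g_ip : is_inner_product g) (h_ip : is_inner_product h).

(* With B a basis of H and G := B g B^T its Gram matrix,
   X |-> X h (B T)^T G^-1 B is the adjoint of T|_H, extended by 0. *)
Lemma diamond_spec_exists : exists D, diamond_spec g h T H D.
Proof.
have [g_sym _] := g_ip; have [h_sym _] := h_ip.
set B := row_base H; have BH : (B :=: H)%MS := eq_row_base H.
have B_free : row_free B := row_base_free H.
clearbody B; have G_unit := gram_unitmx g_ip B_free.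
set G := B *m g *m B^T in G_unit *.
have G_sym : G^T = G by rewrite /G !trmx_mul trmxK g_sym mulmxA.
exists (h *m (B *m T)^T *m invmx G *m B); split.
  move=> X _; split; first by rewrite mulmxA -BH; exact: submxMl.
  move=> y; rewrite -BH => /submxP [b ->].
  rewrite /ip !trmx_mul !trmxK trmx_inv G_sym h_sym !mulmxA.
  suff -> : b *m B *m g *m B^T *m invmx G = b by [].
  by rewrite -[RHS]mulmx1 -(mulmxV G_unit) /G !mulmxA.
move=> X X_perp; rewrite !mulmxA.
suff -> : X *m h *m (B *m T)^T = 0 by rewrite !mul0mx.
apply/rowP => j; rewrite [RHS]mxE -(X_perp (row j (B *m T))); last first.
  exact: submx_trans (row_sub _ _) (submxMl _ _).
by rewrite /ip tr_row colE !mulmxA -colE [RHS]mxE.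
Qed.

Lemma diamondP : diamond_spec g h T H (diamond g h T H).
Proof. exact: (xgetPex 0 diamond_spec_exists). Qed.

Local Notation P := (P_H g h T H).

Lemma P_H_sub : (P <= H)%MS.
Proof.
have [adj _] := diamondP; apply/row_subP => i.
by rewrite row_mul; case: (adj _ (row_sub i T)).
Qed.

Lemma ip_P_H (v y : 'rV[R]_m) :
  (y <= H)%MS -> ip g y (v *m P) = ip h (y *m T) (v *m T).
Proof.
have [adj _] := diamondP; rewrite /P_H mulmxA => yH.
by case: (adj _ (submxMl v T)) => _ ->.
Qed.

Lemma P_H_residual_sub (r : R) (v : 'rV[R]_m) :
  (v <= H)%MS -> (v *m P - r *: v <= H)%MS.
Proof. by move=> vH; rewrite addmx_sub ?eqmx_opp ?scalemx_sub ?(mulmx_sub _ P_H_sub). Qed.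

Lemma P_H_scale_of_conformal (r : R) (v : 'rV[R]_m) :
  (v <= H)%MS -> (forall y, (y <= H)%MS -> ip h (y *m T) (v *m T) = r * ip g y v) ->
  v *m P = r *: v.
Proof.
move=> vH conf; apply/eqP; rewrite -subr_eq0; apply/eqP.
have zH := P_H_residual_sub r vH.
by apply: ip_self_eq0 g_ip _; rewrite ipBr ipZr ip_P_H // conf // subrr.
Qed.

Lemma P_H_scale_of_sqr (r : R) (v : 'rV[R]_m) :
  direct_complement H (kermx T) -> P *m P = r *: P -> (v <= H)%MS ->
  v *m P = r *: v.
Proof.
move=> [_ /mxdirect_addsP capH0] PP vH; set z := v *m P - r *: v.
have zH : (z <= H)%MS := P_H_residual_sub r vH.
have zP0 : z *m P = 0.
  by rewrite /z mulmxBl -scalemxAl -mulmxA PP -scalemxAr subrr.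
have zT0 : z *m T = 0 by apply: ip_self_eq0 h_ip _; rewrite -ip_P_H // zP0 ip0r.
apply/eqP; rewrite -subr_eq0 -/z -submx0 -capH0 sub_capmx zH.
exact/sub_kermxP.
Qed.

Lemma P_H_sqr_of_conformal (r : R) :
  (forall u v, (u <= H)%MS -> (v <= H)%MS -> ip h (u *m T) (v *m T) = r * ip g u v) ->
  P *m P = r *: P.
Proof.
move=> conf; apply/row_matrixP => i.
have rowH : (row i P <= H)%MS := submx_trans (row_sub i P) P_H_sub.
by rewrite row_mul linearZ /=; apply: P_H_scale_of_conformal => // y yH; apply: conf.
Qed.

Lemma geometric_function_of_P_H_sqr (r : R) :
  direct_complement H (kermx T) -> 0 < r -> P *m P = r *: P ->
  geometric_function g h T r.
Proof.
move=> HK r_gt0 PP; exists H; split; first exact: direct_complement_sym.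
split=> // u v uH vH.
by rewrite -ip_P_H // (P_H_scale_of_sqr HK PP vH) ipZr.
Qed.

End Diamond.

Theorem mainTheorem3 (R : realType) (m n : nat) (M N : Type)
  (smooth : (M -> R) -> Prop)
  (gM : M -> 'M[R]_m) (gN : N -> 'M[R]_n) (f : M -> N) (df : M -> 'M[R]_(m, n))
  (hgM : forall x, is_inner_product (gM x))
  (hgN : forall y, is_inner_product (gN y)) :
  conformal_riemannian_morphism smooth gM gN f df <->
  exists lam : M -> R, smooth lam /\ (forall x, 0 < lam x) /\
    exists H : M -> 'M[R]_m, forall x,
      direct_complement (H x) (kermx (df x)) /\
      P_H (gM x) (gN (f x)) (df x) (H x) *m P_H (gM x) (gN (f x)) (df x) (H x)
        = lam x *: P_H (gM x) (gN (f x)) (df x) (H x).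
Proof.
split.
  move=> [lam [lam_smooth [lam_gt0 /choice [H geo]]]].
  exists lam; split=> //; split=> //; exists H => x.
  have [KH [_ conf]] := geo x.
  split; first exact: direct_complement_sym.
  exact (P_H_sqr_of_conformal (hgM x) (hgN (f x)) conf).
move=> [lam [lam_smooth [lam_gt0 [H HP]]]]; exists lam; split=> //; split=> // x.
have [HK PP] := HP x.
exact (geometric_function_of_P_H_sqr (hgM x) (hgN (f x)) HK (lam_gt0 x) PP).
Qed.
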